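(* A division ring $D$ is locally finite if and only if $D$ is weakly locally finite and algebraic over its center.
   Context: Let $D$ have center $F$. $D$ is locally finite if for every finite subset $S\subseteq D$, the division subring $F(S)$ generated by $S$ over $F$ is finite dimensional over $F$. $D$ is weakly locally finite if for every finite subset $S\subseteq D$, the division subring generated by $S$ is finite dimensional over its own center. $D$ is algebraic if every element of $D$ is algebraic over $F$. *)

From mathcomp Require Import all_boot all_order all_algebra.
Set Implicit Arguments. Unset Strict Implicit. Unset Printing Implicit Defensive.
Import GRing.Theory.
Local Open Scope ring_scope.

Definition is_division_ring (D : unitRingType) : Prop :=
  forall x : D, x != 0 -> x \is a GRing.unit.

Definition centerof (D : unitRingType) (K : D -> Prop) : D -> Prop :=
  fun z => K z /\ forall y, K y -> z * y = y * z.

Definition center (D : unitRingType) : D -> Prop := centerof (fun _ => True).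

Definition division_subring (D : unitRingType) (K : D -> Prop) : Prop :=
  [/\ K 1,
      forall x y, K x -> K y -> K (x - y),
      forall x y, K x -> K y -> K (x * y) &
      forall x, K x -> x != 0 -> K x^-1].

Definition div_gen (D : unitRingType) (A : D -> Prop) : D -> Prop :=
  fun x => forall K : D -> Prop,
    division_subring K -> (forall a, A a -> K a) -> K x.

Definition div_gen_over_center (D : unitRingType) (S : seq D) : D -> Prop :=
  div_gen (fun a => center a \/ a \in S).

Definition findim_over (D : unitRingType) (F K : D -> Prop) : Prop :=
  exists (n : nat) (b : 'I_n -> D),
    (forall i, K (b i)) /\
    forall x, K x -> exists c : 'I_n -> D,
      (forall i, F (c i)) /\ x = \sum_(i < n) c i * b i.

Definition locally_finite (D : unitRingType) : Prop :=
  forall S : seq D, findim_over (@center D) (div_gen_over_center S).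

Definition weakly_locally_finite (D : unitRingType) : Prop :=
  forall S : seq D,
    let K := div_gen (fun a => a \in S) in findim_over (centerof K) K.

Definition algebraic_over_center (D : unitRingType) : Prop :=
  forall x : D, exists p : {poly D},
    [/\ p != 0, (forall i, center p`_i) & p.[x] = 0].

From mathcomp Require Import all_boot all_order all_algebra zify.
From Stdlib Require Import Classical IndefiniteDescription.
Set Implicit Arguments. Unset Strict Implicit. Unset Printing Implicit Defensive.
Import GRing.Theory.
Local Open Scope ring_scope.

(* Let F be the center of D, S a finite set and K the division ring generated by S.
   If F(S) is finite dimensional over F, the powers of any x are F-dependent, so x is
   algebraic; and a family in K independent over Z(K) stays independent over F, so its
   size is bounded and a maximal one spans K over Z(K).
   Conversely, if b spans K over Z(K), the coordinates of 1, of S and of the products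
   b_i b_j are finitely many commuting algebraic elements, so they generate a
   finite dimensional commutative F-algebra U; then U b is a finite dimensional
   F-algebra containing F and S, in which algebraicity provides inverses, so U b is
   F(S). *)

Section DivisionSubring.
Variables (D : unitRingType) (K : D -> Prop).
Hypothesis hK : division_subring K.

Lemma dsr1 : K 1.
Proof. by case: hK. Qed.

Lemma dsrB x y : K x -> K y -> K (x - y).
Proof. by case: hK => _ hB _ _; apply: hB. Qed.

Lemma dsrM x y : K x -> K y -> K (x * y).
Proof. by case: hK => _ _ hM _; apply: hM. Qed.

Lemma dsrV x : K x -> x != 0 -> K x^-1.
Proof. by case: hK => _ _ _; apply. Qed.

Lemma dsr0 : K 0.
Proof. by rewrite -(subrr 1); apply: dsrB; apply: dsr1. Qed.

Lemma dsrN x : K x -> K (- x).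
Proof. by move=> hx; rewrite -sub0r; apply: dsrB => //; apply: dsr0. Qed.

Lemma dsrD x y : K x -> K y -> K (x + y).
Proof. by move=> hx hy; rewrite -[y]opprK; apply: dsrB => //; apply: dsrN. Qed.

Lemma dsrX x n : K x -> K (x ^+ n).
Proof.
move=> hx; elim: n => [|n IH]; first by rewrite expr0; apply: dsr1.
by rewrite exprS; apply: dsrM.
Qed.

Lemma dsr_sum (I : finType) (F : I -> D) : (forall i, K (F i)) -> K (\sum_i F i).
Proof. by move=> hF; apply: (big_ind K) => //; [apply: dsr0 | apply: dsrD]. Qed.

End DivisionSubring.

Lemma comm_dsr (D : unitRingType) (t : D) : division_subring (GRing.comm t).
Proof.
split=> [|x y|x y|x tx _]; [exact: commr1 | exact: commrB | exact: commrM | exact: commrV].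
Qed.

Section Span.
Variables (D : unitRingType) (R : D -> Prop).

Definition lspan (I : finType) (w : I -> D) (x : D) :=
  exists c : I -> D, (forall i, R (c i)) /\ x = \sum_i c i * w i.

Definition indep m (a : 'I_m -> D) :=
  forall c : 'I_m -> D, (forall i, R (c i)) -> \sum_i c i * a i = 0 ->
    forall i, c i = 0.

Lemma lspan_ord (T : finType) (w : T -> D) x :
  lspan w x -> lspan (fun i : 'I_#|T| => w (enum_val i)) x.
Proof.
move=> [c [hc ->]]; exists (fun i => c (enum_val i)); split => //.
by rewrite (reindex (@enum_val T _) (onW_bij _ (@enum_val_bij T))).
Qed.

Lemma findim_over_lspan (L : D -> Prop) (I : finType) (w : I -> D) :
  (forall i, L (w i)) -> (forall x, L x -> lspan w x) -> findim_over R L.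
Proof.
move=> wL Lw; exists #|I|, (fun i => w (enum_val i)); split=> // x Lx.
exact: lspan_ord (Lw x Lx).
Qed.

Hypothesis hR : division_subring R.

Lemma lspan0 (I : finType) (w : I -> D) : lspan w 0.
Proof.
exists (fun _ => 0); split=> [i|]; first exact: (dsr0 hR).
by rewrite big1 // => i _; rewrite mul0r.
Qed.

Lemma lspan_gen (I : finType) (w : I -> D) i : lspan w (w i).
Proof.
exists (fun j => if j == i then 1 else 0); split=> [j|].
  by case: ifP => _; [apply: (dsr1 hR) | apply: (dsr0 hR)].
rewrite (bigD1 i) //= eqxx mul1r big1 ?addr0 // => j /negbTE ->; exact: mul0r.
Qed.

Lemma lspanD (I : finType) (w : I -> D) x y :
  lspan w x -> lspan w y -> lspan w (x + y).
Proof.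
move=> [c [hc ->]] [d [hd ->]]; exists (fun i => c i + d i); split.
  by move=> i; apply: (dsrD hR).
by rewrite -big_split /=; apply: eq_bigr => i _; rewrite mulrDl.
Qed.

Lemma lspanZ (I : finType) (w : I -> D) r x : R r -> lspan w x -> lspan w (r * x).
Proof.
move=> hr [c [hc ->]]; exists (fun i => r * c i); split.
  by move=> i; apply: (dsrM hR).
by rewrite mulr_sumr; apply: eq_bigr => i _; rewrite mulrA.
Qed.

Lemma lspanB (I : finType) (w : I -> D) x y :
  lspan w x -> lspan w y -> lspan w (x - y).
Proof.
move=> hx hy; apply: lspanD => //; rewrite -mulN1r.
by apply: lspanZ hy; apply: (dsrN hR); apply: (dsr1 hR).
Qed.

Lemma lspan_sum (I J : finType) (w : I -> D) (F : J -> D) :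
  (forall j, lspan w (F j)) -> lspan w (\sum_j F j).
Proof. by move=> hF; apply: (big_ind (lspan w)) => //; [apply: lspan0 | apply: lspanD]. Qed.

Definition rcons_fam m (a : 'I_m -> D) (x : D) : 'I_m.+1 -> D :=
  fun i => if unlift ord_max i is Some j then a j else x.

Lemma sum_rcons_fam m (c : 'I_m.+1 -> D) a x :
  \sum_i c i * rcons_fam a x i = c ord_max * x + \sum_j c (lift ord_max j) * a j.
Proof.
rewrite (bigD1_ord ord_max) //= /rcons_fam unlift_none.
by under eq_bigr => j _ do rewrite liftK.
Qed.

Lemma lspan_rcons_fam m (a : 'I_m -> D) x y : lspan a y -> lspan (rcons_fam a x) y.
Proof.
move=> [c [hc ->]].
exists (fun i => if unlift ord_max i is Some j then c j else 0); split.
  by move=> i; case: (unlift ord_max i) => [j|]; [apply: hc | apply: (dsr0 hR)].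
rewrite sum_rcons_fam unlift_none mul0r add0r.
by apply: eq_bigr => j _; rewrite liftK.
Qed.

Lemma indep_lift m (a : 'I_m.+1 -> D) (p : 'I_m.+1) :
  indep a -> indep (fun j => a (lift p j)).
Proof.
move=> ha c hc hs j.
pose c' i := if unlift p i is Some j then c j else 0.
have hc' i : R (c' i) by rewrite /c'; case: (unlift p i) => [k|]; [apply: hc | apply: (dsr0 hR)].
suff : c' (lift p j) = 0 by rewrite /c' liftK.
apply: ha => //; rewrite (bigD1_ord p) //= /c' unlift_none mul0r add0r.
by under eq_bigr => k _ do rewrite liftK.
Qed.

End Span.

Section Dependence.
Variables (D : unitRingType) (R : D -> Prop).
Hypotheses (hD : is_division_ring D) (hR : division_subring R).

Lemma lspan_widen n (w : 'I_n.+1 -> D) (c : 'I_n.+1 -> D) :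
  (forall k, R (c k)) -> c ord_max = 0 ->
  lspan R (fun k : 'I_n => w (widen_ord (leqnSn n) k)) (\sum_k c k * w k).
Proof.
move=> hc c0; exists (fun k => c (widen_ord (leqnSn n) k)); split => //.
by rewrite big_ord_recr /= c0 mul0r addr0.
Qed.

Lemma steinitz_dependent n : forall m (w : 'I_n -> D) (v : 'I_m -> D),
  (n < m)%N -> (forall i, lspan R w (v i)) ->
  exists c : 'I_m -> D,
    [/\ forall i, R (c i), exists i, c i != 0 & \sum_i c i * v i = 0].
Proof.
elim: n => [|n IH] m w v ltnm hv.
  exists (fun _ => 1); split=> [_||]; first exact: (dsr1 hR).
  - by exists (Ordinal ltnm); apply: oner_neq0.
  - by apply: big1 => i _; case: (hv i) => c [_ ->]; rewrite big_ord0 mulr0.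
case: m v ltnm hv => [|m] // v ltnm hv.
have [a ha] := functional_choice _ hv.
have va i : v i = \sum_k a i k * w k by case: (ha i).
have aR i k : R (a i k) by case: (ha i).
have [[p ap0]|no_pivot] := classic (exists p, a p ord_max != 0); last first.
  apply: (IH _ _ v (ltnW ltnm)) => i; rewrite va; apply: lspan_widen => //.
  by apply/eqP; apply: contraT => ai0; case: no_pivot; exists i.
(* Eliminate the last generator using the pivot [a p ord_max], then recurse on the
   remaining [m] vectors. *)
pose d j := a (lift p j) ord_max * (a p ord_max)^-1.
have dR j : R (d j) by apply: (dsrM hR); last apply: (dsrV hR).
pose v' j := v (lift p j) - d j * v p.
have hv' j : lspan R (fun k : 'I_n => w (widen_ord (leqnSn n) k)) (v' j).
  have -> : v' j = \sum_k (a (lift p j) k - d j * a p k) * w k.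
    rewrite /v' !va mulr_sumr -sumrB.
    by apply: eq_bigr => k _; rewrite mulrBl mulrA.
  apply: lspan_widen => [k|]; first by apply: (dsrB hR) => //; apply: (dsrM hR).
  by rewrite /d mulrVK ?subrr //; apply: hD.
have [c' [c'R [j0 c'j0] c'0]] := IH _ _ v' ltnm hv'.
pose c i := if unlift p i is Some j then c' j else - \sum_j c' j * d j.
exists c; split.
- move=> i; rewrite /c; case: (unlift p i) => [j|]; first exact: c'R.
  by apply: (dsrN hR); apply: (dsr_sum hR) => j; apply: (dsrM hR).
- by exists (lift p j0); rewrite /c liftK.
- rewrite (bigD1_ord p) //= /c unlift_none.
  under eq_bigr => j _ do rewrite liftK.
  rewrite -[RHS]c'0 /v' mulNr mulr_suml addrC -sumrB.
  by apply: eq_bigr => j _; rewrite mulrBr !mulrA.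
Qed.

Lemma lspan_of_dep_rcons m (a : 'I_m -> D) x :
  indep R a -> ~ indep R (rcons_fam a x) -> lspan R a x.
Proof.
move=> ha hdep; apply: NNPP => hx; apply: hdep => c hc hs.
have cx0 : c ord_max = 0.
  apply/eqP; apply: contraT => cx; case: hx.
  have cU := hD cx.
  exists (fun j => - (c ord_max)^-1 * c (lift ord_max j)); split.
    by move=> j; apply: (dsrM hR); [apply: (dsrN hR); apply: (dsrV hR) | ].
  rewrite sum_rcons_fam in hs.
  have -> : x = (c ord_max)^-1 * (c ord_max * x) by rewrite mulKr.
  rewrite -[c ord_max * x]opprK (addr0_eq hs) mulrN -mulNr mulr_sumr.
  by apply: eq_bigr => j _; rewrite mulrA.
rewrite sum_rcons_fam cx0 mul0r add0r in hs.
by move=> i; case: (unliftP ord_max i) => [j ->|->] //; apply: (ha _ (fun j => hc _) hs).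
Qed.

Lemma indep_subfamily m (f : 'I_m -> D) : exists r (g : 'I_r -> D),
  [/\ forall j, exists i, g j = f i, indep R g & forall i, lspan R g (f i)].
Proof.
elim: m f => [|m IH] f.
  by exists 0%N, (fun _ => 0); split; [case | move=> c _ _; case | case].
have [r [g [gf indep_g span_g]]] := IH (fun i => f (lift ord_max i)).
have [indep_gx|dep_gx] := classic (indep R (rcons_fam g (f ord_max))).
  exists r.+1, (rcons_fam g (f ord_max)); split => // [j|i].
    rewrite /rcons_fam; case: (unlift ord_max j) => [j'|]; last by exists ord_max.
    by have [i ->] := gf j'; exists (lift ord_max i).
  case: (unliftP ord_max i) => [j ->|->]; first exact: lspan_rcons_fam.
  by have := lspan_gen hR (rcons_fam g (f ord_max)) ord_max; rewrite /rcons_fam unlift_none.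
exists r, g; split => // [j|i].
  by have [i ->] := gf j; exists (lift ord_max i).
by case: (unliftP ord_max i) => [j ->|->] //; apply: lspan_of_dep_rcons.
Qed.

End Dependence.

Section DivGen.
Variables (D : unitRingType) (A : D -> Prop).

Lemma div_gen_dsr : division_subring (div_gen A).
Proof.
split=> [K hK _|x y hx hy K hK hA|x y hx hy K hK hA|x hx x0 K hK hA].
- exact: (dsr1 hK).
- by apply: (dsrB hK); [apply: hx | apply: hy].
- by apply: (dsrM hK); [apply: hx | apply: hy].
- by apply: (dsrV hK) => //; apply: hx.
Qed.

Lemma div_gen_incl a : A a -> div_gen A a.
Proof. by move=> ha K _ hA; apply: hA. Qed.

Lemma div_gen_min (K : D -> Prop) : division_subring K ->
  (forall a, A a -> K a) -> forall x, div_gen A x -> K x.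
Proof. by move=> hK hA x; apply. Qed.

End DivGen.

Section Center.
Variable D : unitRingType.
Hypothesis hD : is_division_ring D.

Lemma centerof_dsr (K : D -> Prop) :
  division_subring K -> division_subring (centerof K).
Proof.
move=> hK; split.
- by split=> [|y _]; [apply: (dsr1 hK) | rewrite mul1r mulr1].
- move=> x y [Kx cx] [Ky cy]; split=> [|z Kz]; first exact: (dsrB hK).
  by rewrite mulrBl mulrBr cx // cy.
- move=> x y [Kx cx] [Ky cy]; split=> [|z Kz]; first exact: (dsrM hK).
  by rewrite -mulrA cy // mulrA cx // mulrA.
- move=> x [Kx cx] x0; split=> [|z Kz]; first exact: (dsrV hK).
  have xU := hD x0.
  by apply: (mulrI xU); rewrite mulVKr // mulrA cx // mulrK.
Qed.

Lemma center_dsr : division_subring (@center D).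
Proof. by apply: centerof_dsr; split. Qed.

Lemma sum_commutator_central (I : finType) (g k : I -> D) y :
  (forall j, center (g j)) ->
  \sum_j (y * k j - k j * y) * g j = y * (\sum_j k j * g j) - (\sum_j k j * g j) * y.
Proof.
move=> gc; rewrite mulr_sumr mulr_suml -sumrB; apply: eq_bigr => j _.
by rewrite mulrBl -!mulrA (proj2 (gc j) y Logic.I).
Qed.

Variable K : D -> Prop.
Hypothesis hK : division_subring K.

(* Normalising a relation to have leading coefficient 1 and commuting it with
   [y] in [K] gives a shorter relation, which must vanish: so the normalised
   coefficients are central in [K]. *)
Lemma indep_central_centerof r (g : 'I_r -> D) :
  (forall j, center (g j)) -> indep (centerof K) g -> indep K g.
Proof.
elim: r g => [|r IH] g gc indep_g k kK hs; first by case.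
have IH' := IH _ (fun j => gc _) (indep_lift (centerof_dsr hK) (p := ord0) indep_g).
have [k0|k0] := eqVneq (k ord0) 0.
  move: hs; rewrite big_ord_recl k0 mul0r add0r => hs.
  by move=> j; case: (unliftP ord0 j) => [j' ->|->] //; apply: (IH' _ (fun i => kK _) hs).
exfalso; have k0U := hD k0.
pose k' j := (k ord0)^-1 * k j.
have k'K j : K (k' j) by apply: (dsrM hK) => //; apply: (dsrV hK).
have k'0 : k' ord0 = 1 by rewrite /k' mulVr.
have hs' : \sum_j k' j * g j = 0.
  under eq_bigr => j _ do rewrite -mulrA.
  by rewrite -mulr_sumr hs mulr0.
have k'Z j : centerof K (k' j).
  split=> // y Ky; apply/eqP; rewrite eq_sym -subr_eq0; apply/eqP.
  have := sum_commutator_central k' y gc; rewrite hs' mulr0 mul0r subrr.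
  rewrite big_ord_recl k'0 mul1r mulr1 subrr mul0r add0r => hy.
  case: (unliftP ord0 j) => [j' ->|->]; last by rewrite k'0 mul1r mulr1 subrr.
  apply: (IH' (fun i => y * k' (lift ord0 i) - k' (lift ord0 i) * y) _ hy) => i.
  by apply: (dsrB hK); apply: (dsrM hK).
by have := indep_g k' k'Z hs' ord0; rewrite k'0; apply/eqP; apply: oner_neq0.
Qed.

(* The coefficients of a central relation span, over [centerof K], a space with a
   central basis [g]; rewriting the relation in [g] gives one over [K]. *)
Lemma indep_centerof_center m (a : 'I_m -> D) :
  (forall i, K (a i)) -> indep (centerof K) a -> indep (@center D) a.
Proof.
move=> aK indep_a f fc hs.
have hZ := centerof_dsr hK.
have [r [g [gf indep_g span_g]]] := indep_subfamily hD hZ f.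
have gc j : center (g j) by have [i ->] := gf j.
have [z hz] := functional_choice _ span_g.
have zZ i j : centerof K (z i j) by case: (hz i).
have fz i : f i = \sum_j z i j * g j by case: (hz i).
have hs2 : \sum_j (\sum_i z i j * a i) * g j = 0.
  rewrite -[RHS]hs; under [RHS]eq_bigr => i _ do rewrite fz mulr_suml.
  rewrite exchange_big /=; apply: eq_bigr => j _; rewrite mulr_suml.
  by apply: eq_bigr => i _; rewrite -!mulrA (proj2 (gc j) (a i) Logic.I).
have z0 := indep_central_centerof gc indep_g
  (fun j => dsr_sum hK (fun i => dsrM hK (proj1 (zZ i j)) (aK i))) hs2.
move=> i; rewrite fz big1 // => j _.
by rewrite (indep_a (z^~ j) (zZ^~ j) (z0 j)) mul0r.
Qed.

End Center.

Lemma bounded_nat_last (P : nat -> Prop) n :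
  P 0%N -> (forall k, P k -> (k <= n)%N) -> exists k, P k /\ ~ P k.+1.
Proof.
move=> P0 Pn; suff : forall d k, P k -> (n - k <= d)%N -> exists k, P k /\ ~ P k.+1.
  by move/(_ n 0%N P0); apply; lia.
elim=> [|d IH] k Pk kd.
  by exists k; split=> // Pk1; have := Pn _ Pk1; lia.
have [Pk1|] := classic (P k.+1); last by exists k.
by apply: (IH k.+1 Pk1); have := Pn _ Pk1; lia.
Qed.

Section Forward.
Variable D : unitRingType.
Hypothesis hD : is_division_ring D.

Lemma locally_finite_algebraic : locally_finite D -> algebraic_over_center D.
Proof.
move=> lfD x; have [n [b [_ span_b]]] := lfD [:: x].
have hL := div_gen_dsr (fun a => center a \/ a \in [:: x]).
have xL : div_gen_over_center [:: x] x by apply: div_gen_incl; right; rewrite mem_head.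
have [c [cF [i0 ci0] c0]] := steinitz_dependent hD (center_dsr hD) (ltnSn n)
  (fun i : 'I_n.+1 => span_b _ (dsrX hL i xL)).
exists (\poly_(i < n.+1) c (inord i)); split.
- apply/eqP => /(congr1 (fun p : {poly D} => p`_i0)).
  by rewrite coef_poly ltn_ord inord_val coef0 => /eqP; apply/negP.
- move=> i; rewrite coef_poly; case: ifP => _; first exact: cF.
  exact: (dsr0 (center_dsr hD)).
- rewrite (horner_coef_wide _ (size_poly _ _)) -[RHS]c0.
  by apply: eq_bigr => i _; rewrite coef_poly ltn_ord inord_val.
Qed.

Lemma locally_finite_weakly : locally_finite D -> weakly_locally_finite D.
Proof.
move=> lfD S /=.
pose K := div_gen (fun a => a \in S).
have hK : division_subring K := div_gen_dsr _.
have KL : forall x, K x -> div_gen_over_center S x.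
  by apply: div_gen_min; [apply: div_gen_dsr | move=> a Sa; apply: div_gen_incl; right].
have [n [b [_ span_b]]] := lfD S.
pose P k := exists a : 'I_k -> D, (forall i, K (a i)) /\ indep (centerof K) a.
have P0 : P 0%N by exists (fun _ => 0); split; [case | move=> c _ _; case].
have Pn k : P k -> (k <= n)%N.
  move=> [a [aK indep_a]]; rewrite leqNgt; apply/negP => ltnk.
  have [c [cF [i0 ci0] c0]] :=
    steinitz_dependent hD (center_dsr hD) ltnk (fun i => span_b _ (KL _ (aK i))).
  by move/eqP: ci0; apply; exact: (indep_centerof_center hD hK aK indep_a cF c0).
have [m [[a [aK indep_a]] notPm1]] := bounded_nat_last P0 Pn.
exists m, a; split => // x Kx.
apply: (lspan_of_dep_rcons hD (centerof_dsr hD hK) indep_a) => indep_ax.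
apply: notPm1; exists (rcons_fam a x); split => // i.
by rewrite /rcons_fam; case: (unlift ord_max i).
Qed.

End Forward.

Section CenterSpan.
Variable D : unitRingType.
Hypothesis hD : is_division_ring D.
Local Notation F := (@center D).
Let hF := center_dsr hD.

Definition mul_stable (P : D -> Prop) := forall x y, P x -> P y -> P (x * y).

Definition prod_fam (I J : finType) (v : I -> D) (w : J -> D) (q : I * J) :=
  v q.1 * w q.2.

Lemma lspan_mul (I J : finType) (v : I -> D) (w : J -> D) x y :
  lspan F v x -> lspan F w y -> lspan F (prod_fam v w) (x * y).
Proof.
move=> [c [cF ->]] [d [dF ->]].
exists (fun q => c q.1 * d q.2); split=> [q|]; first exact: (dsrM hF).
rewrite mulr_suml; under eq_bigr => i _ do rewrite mulr_sumr.
rewrite pair_bigA; apply: eq_bigr => [[i j]] _ /=.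
by rewrite /prod_fam -!mulrA (mulrA (v i)) -(proj2 (dF j) (v i) Logic.I) !mulrA.
Qed.

Lemma lspan_mul_stable (I : finType) (w : I -> D) :
  (forall i j, lspan F w (w i * w j)) -> mul_stable (lspan F w).
Proof.
move=> ww x y [c [cF ->]] [d [dF ->]].
rewrite mulr_suml; apply: (lspan_sum hF) => i; rewrite mulr_sumr; apply: (lspan_sum hF) => j.
rewrite -mulrA (mulrA (w i)) -(proj2 (dF j) (w i) Logic.I) !mulrA -mulrA.
by apply: (lspanZ hF _ (ww i j)); apply: (dsrM hF).
Qed.

Lemma lspan_lspan (I J : finType) (u : I -> D) (b : J -> D) y :
  lspan (lspan F u) b y -> lspan F (prod_fam u b) y.
Proof.
by move=> [c [cU ->]]; apply: (lspan_sum hF) => k; exact: (lspan_mul (cU k) (lspan_gen hF b k)).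
Qed.

Lemma prod_fam_mul_stable (I : finType) m (u : I -> D) (b : 'I_m -> D) :
  mul_stable (lspan F u) -> (forall a i, u a * b i = b i * u a) ->
  (forall i j, lspan (lspan F u) b (b i * b j)) ->
  mul_stable (lspan F (prod_fam u b)).
Proof.
move=> Um ub bb; apply: lspan_mul_stable => [[a i] [a' j]]; apply: lspan_lspan.
have -> : prod_fam u b (a, i) * prod_fam u b (a', j) = u a * u a' * (b i * b j).
  by rewrite /prod_fam /= -mulrA (mulrA (b i)) -ub !mulrA.
have [c [cU ->]] := bb i j.
exists (fun k => u a * u a' * c k); split=> [k|].
  by apply: (Um) => //; apply: (Um); apply: (lspan_gen hF).
by rewrite mulr_sumr; apply: eq_bigr => k _; rewrite mulrA.
Qed.

Hypothesis Halg : algebraic_over_center D.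

(* A vanishing polynomial of size [d.+1] expresses [t ^+ d], hence every power of
   [t], through the first [d] powers. *)
Lemma lspan_powers t : exists d, forall k, lspan F (fun e : 'I_d => t ^+ e) (t ^+ k).
Proof.
have [p [pn0 pF pt]] := Halg t.
pose d := (size p).-1.
have sp : size p = d.+1 by rewrite /d prednK // size_poly_gt0.
have pd0 : p`_d != 0 by move: pn0; rewrite -lead_coef_eq0 /lead_coef sp.
have d_gt0 : (0 < d)%N.
  rewrite lt0n; apply/negP => /eqP d0; move: pt pd0.
  by rewrite horner_coef sp d0 big_ord1 expr0 mulr1 => ->; rewrite eqxx.
pose T := lspan F (fun e : 'I_d => t ^+ e).
have Td : T (t ^+ d).
  move/eqP: pt; rewrite horner_coef sp big_ord_recr /= addrC addr_eq0 => /eqP pt.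
  rewrite -[t ^+ d](mulKr (hD pd0)) pt mulrN -mulNr mulr_sumr.
  apply: (lspan_sum hF) => i; rewrite mulrA; apply: (lspanZ hF _ (lspan_gen hF _ i)).
  by apply: (dsrM hF) => //; apply: (dsrN hF); apply: (dsrV hF).
have Tt y : T y -> T (t * y).
  move=> [c [cF ->]]; rewrite mulr_sumr; apply: (lspan_sum hF) => e.
  rewrite mulrA -(proj2 (cF e) t Logic.I) -mulrA -exprS; apply: (lspanZ hF (cF e)).
  have [lt_e1d|] := ltnP e.+1 d; first exact: (lspan_gen hF _ (Ordinal lt_e1d)).
  by move=> le_de1; have -> : e.+1 = d by have := ltn_ord e; lia.
exists d; elim=> [|k IH]; last by rewrite exprS; apply: Tt.
exact: (lspan_gen hF (fun e : 'I_d => t ^+ e) (Ordinal d_gt0)).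
Qed.

Lemma lspan_adjoin (I : finType) (u : I -> D) t :
  lspan F u 1 -> mul_stable (lspan F u) -> (forall i, t * u i = u i * t) ->
  exists d, let V := lspan F (prod_fam (fun e : 'I_d => t ^+ e) u) in
    [/\ V 1, V t, forall x, lspan F u x -> V x & mul_stable V].
Proof.
move=> u1 Um tu; have [d Tk] := lspan_powers t.
exists d; split.
- by have := lspan_mul (Tk 0%N) u1; rewrite expr0 mulr1.
- by have := lspan_mul (Tk 1%N) u1; rewrite expr1 mulr1.
- by move=> x ux; have := lspan_mul (Tk 0%N) ux; rewrite expr0 mul1r.
- apply: lspan_mul_stable => [[e i]] [e' j]; rewrite /prod_fam /=.
  rewrite -mulrA (mulrA (u i)) (commrX e' (commr_sym (tu i))) -mulrA mulrA -exprD.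
  by apply: (lspan_mul (Tk _)); apply: (Um); apply: (lspan_gen hF).
Qed.

Lemma lspan_commuting_subalg (ts : seq D) :
  (forall t t', t \in ts -> t' \in ts -> t * t' = t' * t) ->
  exists (I : finType) (u : I -> D),
    [/\ lspan F u 1, forall t, t \in ts -> lspan F u t, mul_stable (lspan F u) &
        forall i, div_gen (fun t => t \in ts) (u i)].
Proof.
elim: ts => [|t ts IH] tts.
  exists unit, (fun _ => 1); split=> // [|x y|_].
  - exact: (lspan_gen hF (fun _ : unit => 1) tt).
  - apply: lspan_mul_stable => _ _; rewrite mulr1.
    exact: (lspan_gen hF (fun _ : unit => 1) tt).
  - exact: (dsr1 (div_gen_dsr _)).
have [|I [u [u1 uts Um uts']]] := IH.
  by move=> a b a_ts b_ts; apply: tts; rewrite inE ?a_ts ?b_ts orbT.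
have tu i : t * u i = u i * t.
  apply: (div_gen_min (comm_dsr t)) (uts' i) => a a_ts.
  by apply: tts; rewrite inE ?a_ts ?eqxx ?orbT.
have [d [V1 Vt uV Vm]] := lspan_adjoin u1 Um tu.
exists ('I_d * I)%type, (prod_fam (fun e : 'I_d => t ^+ e) u); split=> //.
- by move=> a; rewrite inE => /orP [/eqP ->|a_ts] //; apply: uV; apply: uts.
- move=> [e i]; have hG := div_gen_dsr (fun a => a \in t :: ts).
  apply: (dsrM hG); first by apply: (dsrX hG); apply: div_gen_incl; apply: mem_head.
  apply: (div_gen_min hG) (uts' i) => a a_ts.
  by apply: div_gen_incl; rewrite inE a_ts orbT.
Qed.

Section SubalgebraInverse.
Variables (I : finType) (w : I -> D).
Hypotheses (w1 : lspan F w 1) (wm : mul_stable (lspan F w)).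

Lemma lspan_horner (p : {poly D}) x :
  (forall i, F p`_i) -> lspan F w x -> lspan F w p.[x].
Proof.
move=> pF wx; rewrite horner_coef; apply: (lspan_sum hF) => i.
apply: (lspanZ hF (pF i)); elim: (nat_of_ord i) => [|k IH]; first by rewrite expr0.
by rewrite exprS; apply: wm.
Qed.

(* Cancelling the lowest nonzero coefficient [q0] of a vanishing polynomial
   [q * 'X^j] writes [v^-1] as [- q0^-1 * r.[v]] with [r] over [F]. *)
Lemma lspan_inv v : lspan F w v -> v != 0 -> lspan F w v^-1.
Proof.
move=> wv v0; have vU := hD v0.
have [p [pn0 pF pv]] := Halg v.
have [|j pj0 pj_min] := ex_minnP (P := fun i => p`_i != 0).
  by exists (size p).-1; move: pn0; rewrite -lead_coef_eq0.
pose q := drop_poly j p; pose r := drop_poly 1 q.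
have pq : p = q * 'X^j.
  rewrite -{1}(poly_take_drop j p) [take_poly j p](_ : _ = 0) ?add0r //.
  apply/polyP => i; rewrite coef_take_poly coef0; case: ifP => // lt_ij.
  by apply/eqP; apply: contraT => pi0; have := pj_min i pi0; rewrite leqNgt lt_ij.
have hornerMXn (s : {poly D}) k : (s * 'X^k).[v] = s.[v] * v ^+ k.
  by rewrite hornerM_comm ?hornerXn //; apply/comm_poly_exp/comm_polyX.
have qv : q.[v] = 0 by apply: (mulIr (unitrX j vU)); rewrite mul0r -hornerMXn -pq.
have q0 : q`_0 = p`_j by rewrite coef_drop_poly.
have qr : q.[v] = q`_0 + r.[v] * v.
  rewrite -{1}(poly_take_drop 1 q) hornerD hornerMXn expr1; congr (_ + _).
  have -> : take_poly 1 q = (q`_0)%:P.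
    by apply/polyP => i; rewrite coef_take_poly coefC; case: i.
  exact: hornerC.
have q0U : q`_0 \is a GRing.unit by apply: hD; rewrite q0.
have rv : r.[v] * v = - q`_0 by apply/eqP; rewrite -addr_eq0 addrC -qr qv.
have -> : v^-1 = - (q`_0)^-1 * r.[v].
  by apply: (mulIr vU); rewrite mulVr // -mulrA rv mulrN mulNr opprK mulVr.
apply: (lspanZ hF); first by apply: (dsrN hF); apply: (dsrV hF); rewrite q0 //; apply: pF.
by apply: lspan_horner => // i; rewrite !coef_drop_poly; apply: pF.
Qed.

Lemma lspan_subalg_dsr : division_subring (lspan F w).
Proof. by split=> // [x y|x wx x0]; [apply: lspanB | apply: lspan_inv]. Qed.

End SubalgebraInverse.

End CenterSpan.

Section Backward.
Variable D : unitRingType.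
Hypotheses (hD : is_division_ring D) (Halg : algebraic_over_center D).
Local Notation F := (@center D).

Lemma centerof_coords_subalg (K : D -> Prop) m (b : 'I_m -> D) (E : seq D) :
  division_subring K -> (forall x, K x -> lspan (centerof K) b x) ->
  (forall y, y \in E -> K y) ->
  exists (I : finType) (u : I -> D),
    [/\ forall a, centerof K (u a), mul_stable (lspan F u) &
        forall y, y \in E -> lspan (lspan F u) b y].
Proof.
move=> hK span_b EK.
have [crd crdP] : exists crd : D -> 'I_m -> D, forall y, y \in E ->
    (forall i, centerof K (crd y i)) /\ y = \sum_i crd y i * b i.
  apply: (functional_choice (fun y (c : 'I_m -> D) => y \in E ->
    (forall i, centerof K (c i)) /\ y = \sum_i c i * b i)) => y.
  case: (boolP (y \in E)) => [/EK/span_b [c] ?|_]; first by exists c.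
  by exists (fun _ => 0).
pose ts := [seq crd y i | y <- E, i <- enum 'I_m].
have tsZ t : t \in ts -> centerof K t.
  by move=> /allpairsP [[y i] [yE _ ->]]; apply: (proj1 (crdP y yE)).
have [I [u [_ uts Um uts']]] := lspan_commuting_subalg hD Halg (ts := ts)
  (fun t t' tts t'ts => proj2 (tsZ t tts) t' (proj1 (tsZ t' t'ts))).
exists I, u; split=> // [a|y yE].
  exact: div_gen_min (centerof_dsr hD hK) tsZ _ (uts' a).
exists (crd y); split; last exact: (proj2 (crdP y yE)).
by move=> k; apply: uts; apply/allpairsP; exists (y, k); rewrite mem_enum.
Qed.

Lemma wlf_algebraic_locally_finite : weakly_locally_finite D -> locally_finite D.
Proof.
move=> wlfD S.
pose K := div_gen (fun a => a \in S); pose L := div_gen_over_center S.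
have hK : division_subring K := div_gen_dsr _.
have hL : division_subring L := div_gen_dsr _.
have KL x : K x -> L x by apply: div_gen_min => // a Sa; apply: div_gen_incl; right.
have [m [b [bK span_b]]] := wlfD S.
pose E := 1 :: S ++ [seq b i * b j | i <- enum 'I_m, j <- enum 'I_m].
have EK y : y \in E -> K y.
  rewrite inE mem_cat => /orP [/eqP ->|/orP [Sy|/allpairsP [[i j] [_ _ ->]]]].
  - exact: (dsr1 hK).
  - exact: div_gen_incl.
  - by apply: (dsrM hK); apply: bK.
have [I [u [uZ Um Eb]]] := centerof_coords_subalg hK span_b EK.
have Vm : mul_stable (lspan F (prod_fam u b)).
  apply: prod_fam_mul_stable => // [a i|i j]; first exact: (proj2 (uZ a) (b i) (bK i)).
  apply: Eb; rewrite inE mem_cat; apply/orP; right; apply/orP; right.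
  by apply/allpairsP; exists (i, j); rewrite !mem_enum.
have V1 : lspan F (prod_fam u b) 1.
  by apply: (lspan_lspan hD); apply: (Eb); apply: mem_head.
have hV := lspan_subalg_dsr hD Halg V1 Vm.
apply: (findim_over_lspan (w := prod_fam u b)) => [[a i]|].
  by apply: (dsrM hL); apply: KL; [apply: (proj1 (uZ a)) | apply: bK].
apply: div_gen_min => // a [Fa|Sa].
  by rewrite -[a]mulr1; apply: (lspanZ (center_dsr hD)).
by apply: (lspan_lspan hD); apply: (Eb); rewrite inE mem_cat Sa orbT.
Qed.

End Backward.

Theorem theorem5p2 (D : unitRingType) (hD : is_division_ring D) :
  locally_finite D <-> weakly_locally_finite D /\ algebraic_over_center D.
Proof.
split=> [lfD|[wlfD algD]].
  by split; [apply: locally_finite_weakly | apply: locally_finite_algebraic].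
exact: wlf_algebraic_locally_finite.
Qed.
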